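(* Let $A\subseteq B$ be a ring extension (commutative rings with identity). Then the following conditions are equivalent: (i) the extension $A\subseteq B$ has the finite character, i.e. every $B$-regular ideal of $A$ is contained in only finitely many maximal ideals of $A$; (ii) for any finitely generated $B$-regular ideal $\mathfrak a$ of $A$, every collection of pairwise comaximal, finitely generated, $B$-regular ideals of $A$ containing $\mathfrak a$ is finite.
   Context: An $A$-submodule $S$ of $B$ is called $B$-regular if $SB=B$. Two ideals $\mathfrak b_1,\mathfrak b_2$ of $A$ are comaximal if $\mathfrak b_1+\mathfrak b_2=A$ (equivalently, here, among proper $B$-regular ideals: no proper $B$-regular ideal contains both); a collection is pairwise comaximal if any two distinct members are comaximal. *)

From HB Require Import structures.
From mathcomp Require Import all_boot all_order all_algebra.
From mathcomp Require Import boolp classical_sets cardinality.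
Set Implicit Arguments. Unset Strict Implicit. Unset Printing Implicit Defensive.
Import GRing.Theory.
Local Open Scope ring_scope.
Local Open Scope classical_set_scope.

(* A ring extension A ⊆ B is modelled by an injective ring morphism f : A -> B. *)

Definition is_ideal (A : comPzRingType) (I : set A) : Prop :=
  [/\ I 0, (forall x y, I x -> I y -> I (x + y)) & (forall a x, I x -> I (a * x))].

Definition maximal_ideal (A : comPzRingType) (M : set A) : Prop :=
  [/\ is_ideal M, ~ M 1 &
      forall J : set A, is_ideal J -> M `<=` J -> ~ J 1 -> J = M].

Definition ideal_gen (A : comPzRingType) (n : nat) (s : 'I_n -> A) : set A :=
  [set x | exists c : 'I_n -> A, x = \sum_(i < n) c i * s i].

Definition fin_gen (A : comPzRingType) (I : set A) : Prop :=
  exists n (s : 'I_n -> A), I = ideal_gen s.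

Definition ext_span (A B : comPzRingType) (f : A -> B) (S : set A) : set B :=
  [set x | exists n (a : 'I_n -> A) (b : 'I_n -> B),
      (forall i, S (a i)) /\ x = \sum_(i < n) f (a i) * b i].

Definition B_regular (A B : comPzRingType) (f : A -> B) (S : set A) : Prop :=
  ext_span f S = setT.

Definition ideal_sum (A : comPzRingType) (I J : set A) : set A :=
  [set x | exists i j, [/\ I i, J j & x = i + j]].

Definition comaximal (A : comPzRingType) (I J : set A) : Prop :=
  ideal_sum I J = setT.

Definition pairwise_comaximal (A : comPzRingType) (C : set (set A)) : Prop :=
  forall I J, C I -> C J -> I <> J -> comaximal I J.

Definition finite_character (A B : comPzRingType) (f : A -> B) : Prop :=
  forall I : set A, is_ideal I -> B_regular f I ->
    finite_set [set M | maximal_ideal M /\ I `<=` M].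

From HB Require Import structures.
From mathcomp Require Import all_boot all_order all_algebra.
From mathcomp Require Import boolp classical_sets cardinality.
Set Implicit Arguments. Unset Strict Implicit. Unset Printing Implicit Defensive.
Import GRing.Theory.
Local Open Scope ring_scope.
Local Open Scope classical_set_scope.

(* (i) => (ii): a proper member of a pairwise comaximal family C of ideals
   over a lies in a maximal ideal over a, and no maximal ideal contains two
   distinct members of C; so, apart from A itself, C is indexed by part of the
   finite set of maximal ideals over a.
   (ii) => (i): as 1 lies in IB, a B-regular ideal I contains a finitely
   generated B-regular ideal a = (s). If a lies in infinitely many maximal
   ideals, we build pairwise coprime x_0, x_1, ..., each in some maximal ideal
   over a: given g = x_0 ... x_(k-1) such that infinitely many maximal ideals
   over a avoid g, two of them, M and N, yield coprime x in M and q in N, both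
   coprime to g; every maximal ideal avoiding g avoids gx or gq, so one of
   these two still has infinitely many, and that element is x_k. The ideals
   (s, x_k) then form an infinite pairwise comaximal family of proper,
   finitely generated, B-regular ideals over a. *)

Section Ideals.
Variable A : comPzRingType.
Implicit Types (I J M N : set A) (x y z : A).

Lemma ideal0 I : is_ideal I -> I 0.
Proof. by case. Qed.

Lemma idealD I x y : is_ideal I -> I x -> I y -> I (x + y).
Proof. by case=> _ + _; apply. Qed.

Lemma idealMl I a x : is_ideal I -> I x -> I (a * x).
Proof. by case=> _ _; apply. Qed.

Lemma idealMr I a x : is_ideal I -> I x -> I (x * a).
Proof. by rewrite mulrC; apply: idealMl. Qed.

Lemma ideal_sum_mem I n (F : 'I_n -> A) :
  is_ideal I -> (forall i, I (F i)) -> I (\sum_(i < n) F i).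
Proof.
move=> iI IF; apply: (big_ind I) => //; first exact: ideal0.
by move=> x y; exact: idealD.
Qed.

Lemma ideal_eqT I : is_ideal I -> I 1 -> I = setT.
Proof.
by move=> iI I1; apply/seteqP; split=> // x _; rewrite -(mulr1 x); exact: idealMl.
Qed.

Lemma ideal_gen_is_ideal n (s : 'I_n -> A) : is_ideal (ideal_gen s).
Proof.
split.
- by exists (fun _ => 0); rewrite big1 // => i _; rewrite mul0r.
- move=> _ _ [c ->] [d ->]; exists (fun i => c i + d i).
  by rewrite -big_split /=; apply: eq_bigr => i _; rewrite mulrDl.
- move=> a _ [c ->]; exists (fun i => a * c i).
  by rewrite mulr_sumr; apply: eq_bigr => i _; rewrite mulrA.
Qed.

Lemma ideal_gen_mem n (s : 'I_n -> A) i : ideal_gen s (s i).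
Proof.
exists (fun j => (j == i)%:R).
by rewrite (bigD1 i) //= eqxx mul1r big1 ?addr0 // => j /negbTE ->; rewrite mul0r.
Qed.

Lemma ideal_gen_sub I n (s : 'I_n -> A) :
  is_ideal I -> (forall i, I (s i)) -> ideal_gen s `<=` I.
Proof.
by move=> iI Is _ [c ->]; apply: ideal_sum_mem => // i; exact: idealMl.
Qed.

Definition gen_cons n x (s : 'I_n -> A) : 'I_n.+1 -> A :=
  fun i => if unlift ord0 i is Some j then s j else x.

Lemma ideal_gen_cons0 n x (s : 'I_n -> A) : ideal_gen (gen_cons x s) x.
Proof. by have := ideal_gen_mem (gen_cons x s) ord0; rewrite /gen_cons unlift_none. Qed.

Lemma ideal_gen_consl n x (s : 'I_n -> A) :
  ideal_gen s `<=` ideal_gen (gen_cons x s).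
Proof.
move=> _ [c ->]; exists (fun i => if unlift ord0 i is Some j then c j else 0).
rewrite big_ord_recl /gen_cons unlift_none mul0r add0r.
by apply: eq_bigr => i _; rewrite liftK.
Qed.

Lemma maximal_ideal_unit_mod M z :
  maximal_ideal M -> ~ M z -> exists r, M (1 - r * z).
Proof.
case=> iM M1 Mmax Mz.
pose J := [set y | exists r, M (y - r * z)].
have iJ : is_ideal J.
  split.
  - by exists 0; rewrite mul0r subr0; exact: ideal0.
  - move=> y y' [r Mr] [r' Mr']; exists (r + r').
    by rewrite mulrDl opprD addrACA; exact: idealD.
  - move=> a y [r Mr]; exists (a * r).
    by rewrite -mulrA -mulrBr; exact: idealMl.
have MJ : M `<=` J by move=> m Mm; exists 0; rewrite mul0r subr0.
apply: contrapT => J1; apply: Mz; rewrite -(Mmax J iJ MJ J1).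
by exists 1; rewrite mul1r subrr; exact: ideal0.
Qed.

Lemma maximal_ideal_prime M x y :
  maximal_ideal M -> M (x * y) -> M x \/ M y.
Proof.
move=> mM Mxy; case: (pselect (M x)) => Mx; [by left | right].
have [r Mr] := maximal_ideal_unit_mod mM Mx; have [iM _ _] := mM.
have -> : y = y * (1 - r * x) + r * (x * y).
  by rewrite mulrBr mulr1 [y * _]mulrCA (mulrC x y) subrK.
by apply: idealD => //; [exact: idealMl | exact: idealMl].
Qed.

Lemma maximal_ideal_neq M N :
  maximal_ideal M -> maximal_ideal N -> M <> N -> exists n, N n /\ ~ M n.
Proof.
move=> [iM M1 _] [_ _ Nmax] MN; apply: contrapT => noN; apply: MN.
apply: Nmax => // n Nn; apply: contrapT => Mn; apply: noN; by exists n.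
Qed.

Lemma maximal_ideal_exists I :
  is_ideal I -> ~ I 1 -> exists M, maximal_ideal M /\ I `<=` M.
Proof.
move=> iI I1; pose proper_over J := [/\ is_ideal J, ~ J 1 & I `<=` J].
(* [set0] is admitted only to give the empty chain an upper bound. *)
pose P J := J = set0 \/ proper_over J.
have [M [PM Mmax]] : exists M, P M /\ forall N, M `<` N -> ~ P N.
  apply: Zorn_bigcup => F FP Ftot.
  have FPn X w : F X -> X w -> proper_over X.
    by move=> FX Xw; case: (FP X FX) => // X0; rewrite X0 in Xw.
  case: (pselect (\bigcup_(X in F) X !=set0)) => [[z [X0 FX0 X0z]]|U0]; last first.
    by left; apply/seteqP; split=> // w Uw; apply: U0; exists w.
  have [iX0 _ IX0] := FPn X0 z FX0 X0z.
  right; split.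
  - split; first by exists X0 => //; exact: ideal0.
    + move=> x y [X1 FX1 X1x] [X2 FX2 X2y].
      have [iX1 _ _] := FPn X1 x FX1 X1x; have [iX2 _ _] := FPn X2 y FX2 X2y.
      case: (Ftot X1 X2 FX1 FX2) => S12.
      * by exists X2 => //; apply: idealD => //; exact: S12.
      * by exists X1 => //; apply: idealD => //; exact: S12.
    + move=> a x [X1 FX1 X1x]; have [iX1 _ _] := FPn X1 x FX1 X1x.
      by exists X1 => //; exact: idealMl.
  - by move=> [X1 FX1 X11]; have [_ + _] := FPn X1 1 FX1 X11.
  - by move=> w Iw; exists X0 => //; exact: IX0.
have [iM M1 IM] : proper_over M.
  case: PM => // M0; exfalso; apply: (Mmax I); last by right; split.
  by rewrite M0; split=> // /(_ 0 (ideal0 iI)).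
exists M; split=> //; split=> // J iJ MJ J1; apply: contrapT => JM.
apply: (Mmax J); last by right; split=> //; exact: subset_trans MJ.
by split=> // JM'; apply: JM; apply/seteqP; split.
Qed.

Lemma comaximal_maximal_sub I J M :
  maximal_ideal M -> comaximal I J -> I `<=` M -> ~ J `<=` M.
Proof.
move=> [iM M1 _] IJ IM JM; have : ideal_sum I J 1 by rewrite IJ.
by case=> i [j [Ii Jj e]]; apply: M1; rewrite e; exact: idealD iM (IM _ Ii) (JM _ Jj).
Qed.

Definition coprimer x y : Prop := exists u v, u * x + v * y = 1.

Lemma coprimerC x y : coprimer x y -> coprimer y x.
Proof. by case=> u [v e]; exists v, u; rewrite addrC. Qed.

Lemma coprimer_dvdr x y z : coprimer x (y * z) -> coprimer x z.
Proof. by case=> u [v e]; exists u, (v * y); rewrite -mulrA. Qed.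

Lemma maximal_ideal_coprimer M x y :
  maximal_ideal M -> coprimer x y -> M x -> ~ M y.
Proof.
move=> [iM M1 _] [u [v e]] Mx My; apply: M1; rewrite -e.
by apply: (idealD iM); exact: idealMl.
Qed.

Lemma coprimer_comaximal I J x y :
  is_ideal I -> is_ideal J -> I x -> J y -> coprimer x y -> comaximal I J.
Proof.
move=> iI iJ Ix Jy [u [v e]]; apply/seteqP; split=> // z _.
exists (z * (u * x)), (z * (v * y)); split.
- exact: idealMl _ (idealMl _ iI Ix).
- exact: idealMl _ (idealMl _ iJ Jy).
- by rewrite -mulrDr e mulr1.
Qed.

Lemma maximal_ideals_separate (M N : set A) g :
  maximal_ideal M -> maximal_ideal N -> M <> N -> ~ M g -> ~ N g ->
  exists x q, [/\ M x, N q, coprimer x g, coprimer q g & coprimer x q].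
Proof.
move=> mM mN MN Mg Ng; have [n [Nn Mn]] := maximal_ideal_neq mM mN MN.
have Mng : ~ M (n * g) by case/(maximal_ideal_prime mM).
have [r Mx] := maximal_ideal_unit_mod mM Mng; set x := 1 - _ in Mx.
have Nx : ~ N x.
  have [iN N1 _] := mN; move=> Nx; apply: N1.
  rewrite -(subrK (r * (n * g)) 1); apply: (idealD iN Nx).
  exact: idealMl _ (idealMr _ iN Nn).
have Nxg : ~ N (x * g) by case/(maximal_ideal_prime mN).
have [t Nq] := maximal_ideal_unit_mod mN Nxg; set q := 1 - _ in Nq.
exists x, q; split=> //.
- by exists 1, (r * n); rewrite mul1r -mulrA subrK.
- by exists 1, (t * x); rewrite mul1r -mulrA subrK.
- by exists (t * g), 1; rewrite mul1r mulrAC -mulrA addrC subrK.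
Qed.

Lemma pairwise_comaximal_finite (a : set A) (C : set (set A)) :
  (forall I, C I -> is_ideal I /\ a `<=` I) -> pairwise_comaximal C ->
  finite_set [set M | maximal_ideal M /\ a `<=` M] -> finite_set C.
Proof.
move=> HC pC finM.
have /boolp.choice[psi psiP] : forall M : set A,
    exists J, (exists I, C I /\ I `<=` M) -> C J /\ J `<=` M.
  move=> M; case: (pselect (exists I, C I /\ I `<=` M)) => [[I HI]|noI].
    by exists I.
  by exists setT => /noI.
apply: (@sub_finite_set _ _ ([set setT] `|` psi @` [set M | maximal_ideal M /\ a `<=` M])).
  move=> I CI; have [iI aI] := HC I CI.
  case: (pselect (I 1)) => I1; first by left; exact: ideal_eqT.
  right; have [M [mM IM]] := maximal_ideal_exists iI I1.
  exists M; first by split=> //; exact: subset_trans IM.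
  have [CpsiM psiMM] := psiP M (ex_intro _ I (conj CI IM)).
  apply: contrapT => nI.
  exact: comaximal_maximal_sub mM (pC _ _ CpsiM CI nI) psiMM IM.
by rewrite finite_setU; split=> //; exact: finite_image.
Qed.

End Ideals.

Section InfiniteMaximal.
Variables (A : comPzRingType) (a : set A).

Definition max_avoiding (g : A) :=
  [set M : set A | [/\ maximal_ideal M, a `<=` M & ~ M g]].

Lemma max_avoiding_split g : infinite_set (max_avoiding g) ->
  exists x, [/\ coprimer x g,
                exists M, [/\ maximal_ideal M, a `<=` M & M x] &
                infinite_set (max_avoiding (g * x))].
Proof.
move=> infY; have [M [mM aM Mg]] := infinite_setN0 infY.
have [N [[mN aN Ng] NM]] := infinite_setN0 (infinite_setD infY (finite_set1 M)).
have [x [q [Mx Nq xg qg xq]]] := maximal_ideals_separate mM mN (nesym NM) Mg Ng.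
case: (pselect (finite_set (max_avoiding (g * x)))) => finx; last first.
  by exists x; split=> //; exists M.
case: (pselect (finite_set (max_avoiding (g * q)))) => finq; last first.
  by exists q; split=> //; exists N.
exfalso; apply: infY.
apply: (@sub_finite_set _ _ (max_avoiding (g * x) `|` max_avoiding (g * q))); last first.
  by rewrite finite_setU.
move=> P [mP aP Pg]; case: (pselect (P x)) => Px.
  by right; split=> // /(maximal_ideal_prime mP) [//|]; exact: maximal_ideal_coprimer xq Px.
by left; split=> // /(maximal_ideal_prime mP) [].
Qed.

Lemma coprimer_seq_of_infinite_maximal :
  infinite_set [set M | maximal_ideal M /\ a `<=` M] ->
  exists x : nat -> A,
    (forall k, exists M, [/\ maximal_ideal M, a `<=` M & M (x k)]) /\
    (forall k m, k <> m -> coprimer (x k) (x m)).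
Proof.
move=> infM.
have {infM} infY1 : infinite_set (max_avoiding 1).
  apply: contra_not infM; apply: sub_finite_set => M [mM aM].
  by split=> //; case: mM.
have /boolp.choice[next nextP] : forall g, exists x, infinite_set (max_avoiding g) ->
    [/\ coprimer x g, exists M, [/\ maximal_ideal M, a `<=` M & M x] &
        infinite_set (max_avoiding (g * x))].
  move=> g.
  case: (pselect (finite_set (max_avoiding g))) => [fin|/max_avoiding_split [x ?]].
    by exists 0 => /(_ fin).
  by exists x.
pose prod k := iter k (fun g => g * next g) 1.
have infprod k : infinite_set (max_avoiding (prod k)).
  by elim: k => [//|k IH]; have [_ _] := nextP _ IH.
have prod_dvd k m : (k < m)%N -> exists w, prod m = w * next (prod k).
  elim: m => [//|m IH]; rewrite ltnS leq_eqVlt => /orP[/eqP <-|/IH [w ew]].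
    by exists (prod k).
  by exists (w * next (prod m)); rewrite /= -/(prod m) ew mulrAC.
exists (fun k => next (prod k)); split=> [k|]; first by have [] := nextP _ (infprod k).
suff lt_coprime k m : (k < m)%N -> coprimer (next (prod m)) (next (prod k)).
  by move=> k m /eqP; rewrite neq_ltn => /orP[/lt_coprime/coprimerC|/lt_coprime].
move=> km; have [w ew] := prod_dvd k m km; have [pm _ _] := nextP _ (infprod m).
by apply: (coprimer_dvdr (y := w)); rewrite -ew.
Qed.

End InfiniteMaximal.

Lemma infinite_comaximal_family (A : comPzRingType) n (s : 'I_n -> A) :
  infinite_set [set M | maximal_ideal M /\ ideal_gen s `<=` M] ->
  exists C : set (set A), [/\ infinite_set C,
    forall I, C I -> [/\ is_ideal I, fin_gen I & ideal_gen s `<=` I] &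
    pairwise_comaximal C].
Proof.
move=> /coprimer_seq_of_infinite_maximal [x [xM xcop]].
pose J k := ideal_gen (gen_cons (x k) s).
have iJ k : is_ideal (J k) := ideal_gen_is_ideal _.
have JM k : exists M, maximal_ideal M /\ J k `<=` M.
  have [M [mM sM Mx]] := xM k; exists M; split=> //.
  apply: ideal_gen_sub; first by case: mM.
  by move=> i; rewrite /gen_cons; case: unlift => [j|//]; apply: sM; exact: ideal_gen_mem.
have comJ k m : k <> m -> comaximal (J k) (J m).
  by move=> km; apply: coprimer_comaximal (xcop k m km) => //; exact: ideal_gen_cons0.
have Jinj : injective J.
  move=> k m Jkm; apply: contrapT => km; have [M [mM JkM]] := JM k.
  by apply: (comaximal_maximal_sub mM (comJ k m km) JkM); rewrite -Jkm.
exists (range J); split.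
- move=> finJ; apply: infinite_nat.
  apply: (@sub_finite_set _ _ (J @^-1` range J)); first by move=> k _; exists k.
  by apply: finite_preimage finJ => k m _ _; exact: Jinj.
- move=> _ [k _ <-]; split=> //; last exact: ideal_gen_consl.
  by exists n.+1, (gen_cons (x k) s).
- by move=> _ _ [k _ <-] [m _ <-] Jkm; apply: comJ => km; apply: Jkm; rewrite km.
Qed.

Section BRegular.
Variables (A B : comPzRingType) (f : A -> B).

Lemma B_regularS (I J : set A) : I `<=` J -> B_regular f I -> B_regular f J.
Proof.
move=> IJ regI; apply/seteqP; split=> // y _.
have : ext_span f I y by rewrite regI.
by case=> m [c [b [Ic ->]]]; exists m, c, b; split=> // i; exact: IJ.
Qed.

Lemma B_regular_fin_gen_sub (I : set A) : B_regular f I ->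
  exists n (s : 'I_n -> A), B_regular f (ideal_gen s) /\ forall i, I (s i).
Proof.
move=> regI; have : ext_span f I 1 by rewrite regI.
case=> n [s [b [Is e1]]]; exists n, s; split=> //.
apply/seteqP; split=> // y _; exists n, s, (fun i => b i * y); split.
  by move=> i; exact: ideal_gen_mem.
by rewrite -[LHS]mul1r {1}e1 mulr_suml; apply: eq_bigr => i _; rewrite mulrA.
Qed.

End BRegular.

Theorem corollary3p3 (A B : comPzRingType) (f : {rmorphism A -> B})
    (f_inj : injective f) :
  finite_character f <->
  (forall a : set A, is_ideal a -> fin_gen a -> B_regular f a ->
     forall C : set (set A),
       (forall I, C I -> [/\ is_ideal I, fin_gen I, B_regular f I & a `<=` I]) ->
       pairwise_comaximal C -> finite_set C).
Proof.
split.
- move=> fc a ia _ rega C HC pC.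
  by apply: (pairwise_comaximal_finite _ pC (fc a ia rega)) => I /HC[].
- move=> finC I iI regI; apply: contrapT => infI.
  have [n [s [regs Is]]] := B_regular_fin_gen_sub regI.
  have sI : ideal_gen s `<=` I := ideal_gen_sub iI Is.
  have [|C [infC HC pC]] := @infinite_comaximal_family A n s.
    apply: contra_not infI; apply: sub_finite_set => M [mM IM].
    by split=> //; exact: subset_trans IM.
  apply: infC; apply: (finC _ (ideal_gen_is_ideal s) _ regs) => //.
    by exists n, s.
  by move=> J /HC[iJ fgJ sJ]; split=> //; exact: B_regularS regs.
Qed.
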